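(* Let $\mathcal N\subseteq\mathcal X^2$ be a symmetric neighbor relation, $Q$ a probability measure on $\mathcal Z$, and $P_{Z|X}$ a Markov kernel with $P_{Z|X}(\cdot|x)\ll Q$ for all $x$. If $P_{Z|X}$ is $\varepsilon$-DP with respect to $\mathcal N$, then for every $\alpha>1$ the PPR-compressed mechanism $x\mapsto((Z_i)_{i\ge1},K)$ is $2\alpha\varepsilon$-DP with respect to $\mathcal N$; i.e., for all $(x,x')\in\mathcal N$ and all measurable $\mathcal S\subseteq\mathcal Z^{\infty}\times\mathbb Z_{>0}$, $\Pr(((Z_i)_i,K)\in\mathcal S\mid X=x)\le e^{2\alpha\varepsilon}\Pr(((Z_i)_i,K)\in\mathcal S\mid X=x')$.
   Context: A Markov kernel $P_{W|X}$ is $(\varepsilon,\delta)$-DP w.r.t. a symmetric relation $\mathcal N\subseteq\mathcal X^2$ if $\Pr(W\in S\mid X=x)\le e^{\varepsilon}\Pr(W\in S\mid X=x')+\delta$ for all $(x,x')\in\mathcal N$ and measurable $S$; $\varepsilon$-DP means $(\varepsilon,0)$-DP. PPR: let $Z_1,Z_2,\ldots$ be i.i.d. $\sim Q$, independent of the points $T_1\le T_2\le\cdots$ of a rate-$1$ Poisson process on $[0,\infty)$. For input $x$, with $P=P_{Z|X}(\cdot|x)$, set $\tilde T_i:=T_i(\frac{\mathrm dP}{\mathrm dQ}(Z_i))^{-1}$ ($:=\infty$ if the derivative is $0$, $\infty^{-\alpha}:=0$), and draw $K$ with $\Pr(K=k\mid (Z_i,T_i)_i)=\tilde T_k^{-\alpha}/\sum_i\tilde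 T_i^{-\alpha}$ (fresh randomness for each input). The PPR-compressed mechanism is the kernel $x\mapsto((Z_i)_{i\ge1},K)$; the shared sequence $(Z_i)$ does not depend on $x$. *)

From HB Require Import structures.
From mathcomp Require Import all_boot all_order all_algebra.
From mathcomp Require Import all_classical all_reals all_analysis.
Set Implicit Arguments. Unset Strict Implicit. Unset Printing Implicit Defensive.
Import Order.TTheory GRing.Theory Num.Theory.
Local Open Scope classical_set_scope.
Local Open Scope ring_scope.

Section defs.
Context {R : realType}.

Definition mutually_independent {dO} {Omega : measurableType dO} {I : eqType}
  (P : probability Omega R) (F : I -> set (set Omega)) : Prop :=
  forall (J : seq I) (E : I -> set Omega), uniq J ->
    (forall j, j \in J -> F j (E j)) ->
    P (\big[setI/setT]_(j <- J) E j) = (\prod_(j <- J) P (E j))%E.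

Definition sigma_of {dO d} {Omega : measurableType dO} {T : measurableType d}
  (X : Omega -> T) : set (set Omega) :=
  [set X @^-1` A | A in [set A : set T | measurable A]].

Definition DP {X T : Type} (N : X -> X -> Prop) (eps delta : R)
   (meas : set T -> Prop) (mu : X -> set T -> \bar R) : Prop :=
  forall x x' S, N x x' -> meas S ->
    (mu x S <= (expR eps)%:E * mu x' S + delta%:E)%E.

(* product sigma-algebra on Z^infty x Z_{>0} (second component 0-indexed) *)
Definition seq_nat_measurable {d} {Z : measurableType d} : set (set ((nat -> Z) * nat)) :=
  <<s [set: (nat -> Z) * nat],
      [set E | exists (i : nat) (A : set Z), measurable A /\ E = [set p | A (p.1 i)]]
      `|` [set E | exists n : nat, E = [set p | p.2 = n]] >>.

(* arrival times T_0 <= T_1 <= ... of a rate-1 Poisson process built from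
   i.i.d. Exp(1) inter-arrival times E_0, E_1, ... (0-indexed: T_k = E_0+...+E_k) *)
Definition arrival {Omega : Type} (Es : nat -> Omega -> R) (k : nat) (w : Omega) : R :=
  \sum_(j < k.+1) Es j w.

(* unnormalized PPR weight  T~_i^(-alpha) = T_i^(-alpha) * (dP/dQ (Z_i))^alpha,
   with the convention T~_i = oo, T~_i^(-alpha) = 0 when dP/dQ (Z_i) = 0 *)
Definition ppr_uweight {Omega : Type} {Z : Type} (alpha : R) (f : Z -> R)
  (Zs : nat -> Omega -> Z) (Ts : nat -> Omega -> R) (w : Omega) (i : nat) : R :=
  (Ts i w) `^ (- alpha) * (f (Zs i w)) `^ alpha.

(* Pr(K = k | (Z_i, T_i)_i) *)
Definition ppr_weight {Omega : Type} {Z : Type} (alpha : R) (f : Z -> R)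
  (Zs : nat -> Omega -> Z) (Ts : nat -> Omega -> R) (w : Omega) (k : nat) : R :=
  ppr_uweight alpha f Zs Ts w k
  / fine (\sum_(i <oo) (ppr_uweight alpha f Zs Ts w i)%:E)%E.

(* Pr(((Z_i)_i, K) \in S) for the PPR-compressed mechanism with density f = dP/dQ:
   E[ sum_k 1_S((Z_i)_i, k) Pr(K = k | (Z_i,T_i)_i) ] *)
Definition ppr_prob {dO d} {Omega : measurableType dO} {Z : measurableType d}
  (alpha : R) (f : Z -> R) (Zs : nat -> Omega -> Z) (Ts : nat -> Omega -> R)
  (P : probability Omega R) (S : set ((nat -> Z) * nat)) : \bar R :=
  (\int[P]_w \sum_(k <oo)
      ((\1_S ((fun i => Zs i w), k) : R)%:E * (ppr_weight alpha f Zs Ts w k)%:E))%E.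

End defs.

From HB Require Import structures.
From mathcomp Require Import all_boot all_order all_algebra.
From mathcomp Require Import all_classical all_reals all_analysis.
From mathcomp Require Import ring.
Import measurable_realfun HBNNSimple.
Import Order.TTheory GRing.Theory Num.Theory.
Local Open Scope classical_set_scope.
Local Open Scope ring_scope.

(* The bound holds for every realization of the shared randomness.  By eps-DP the
   density ratio f x / f x' lies in [e^-eps, e^eps] Q-almost everywhere, hence
   almost surely at every sample Z_i.  There, each unnormalized weight
   T_i^-alpha f(Z_i)^alpha changes by a factor at most e^(alpha eps) in either
   direction, so each normalized weight Pr(K = k | (Z_i, T_i)_i) changes by at
   most e^(2 alpha eps); integrate over the shared randomness. *)

Section normalized_weights.
Variable R : realType.

Lemma nneseries_le_scale (u v : nat -> R) (E : R) : 0 <= E ->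
  (forall i, 0 <= u i) -> (forall i, 0 <= v i) -> (forall i, u i <= E * v i) ->
  (\sum_(i <oo) (u i)%:E <= E%:E * \sum_(i <oo) (v i)%:E)%E.
Proof.
move=> E0 u0 v0 uv; rewrite -nneseriesZl => [|i _]; last by rewrite lee_fin.
apply: lee_nneseries => [i _ _|i _]; first by rewrite lee_fin.
by rewrite -EFinM lee_fin.
Qed.

(* [fine] sends a divergent normalizer to [0]; the two normalizers diverge
   together, and then both sides vanish. *)
Lemma normalized_le (u v : nat -> R) (E : R) : 0 < E ->
  (forall i, 0 <= u i) -> (forall i, 0 <= v i) ->
  (forall i, u i <= E * v i) -> (forall i, v i <= E * u i) -> forall k,
  u k / fine (\sum_(i <oo) (u i)%:E)%E
    <= E * E * (v k / fine (\sum_(i <oo) (v i)%:E)%E).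
Proof.
move=> E0 u0 v0 uv vu k.
have SU0 : (0 <= \sum_(i <oo) (u i)%:E)%E.
  by apply: nneseries_ge0 => i _ _; rewrite lee_fin.
have SV0 : (0 <= \sum_(i <oo) (v i)%:E)%E.
  by apply: nneseries_ge0 => i _ _; rewrite lee_fin.
have SUV := @nneseries_le_scale u v E (ltW E0) u0 v0 uv.
have SVU := @nneseries_le_scale v u E (ltW E0) v0 u0 vu.
have rhs0 : 0 <= E * E * (v k / fine (\sum_(i <oo) (v i)%:E)%E).
  by rewrite !mulr_ge0 ?invr_ge0 ?fine_ge0 // ltW.
move: SU0 SV0 SUV SVU rhs0.
case: (\sum_(i <oo) (u i)%:E)%E => [a| |] //=; last by rewrite invr0 mulr0.
case: (\sum_(i <oo) (v i)%:E)%E => [b| |] //=.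
rewrite !lee_fin => a0 b0 ab ba rhs0.
have [->|anz] := eqVneq a 0; first by rewrite invr0 mulr0.
have apos : 0 < a by rewrite lt_def anz.
have bpos : 0 < b.
  by rewrite lt_def b0 andbT; apply: (contraTneq _ ab) => ->; rewrite mulr0 -ltNge.
rewrite ler_pdivrMr // (le_trans (uv k)) //.
have -> : E * E * (v k / b) * a = E * v k * (E * a / b) by field; exact: lt0r_neq0.
apply: ler_peMr; first by rewrite mulr_ge0 // ltW.
by rewrite ler_pdivlMr // mul1r.
Qed.

End normalized_weights.

Section ppr_weights.
Variables (R : realType) (Omega Z : Type) (alpha : R).
Variables (Zs : nat -> Omega -> Z) (Ts : nat -> Omega -> R).

Lemma ppr_uweight_ge0 (f : Z -> R) w i : 0 <= ppr_uweight alpha f Zs Ts w i.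
Proof. exact: mulr_ge0 (powR_ge0 _ _) (powR_ge0 _ _). Qed.

Lemma ppr_weight_ge0 (f : Z -> R) w k : 0 <= ppr_weight alpha f Zs Ts w k.
Proof.
apply: divr_ge0; first exact: ppr_uweight_ge0.
by apply/fine_ge0/nneseries_ge0 => i _ _; rewrite lee_fin ppr_uweight_ge0.
Qed.

Lemma ppr_uweight_le (f g : Z -> R) (e : R) w i : 0 <= alpha -> 0 <= e ->
  0 <= f (Zs i w) -> 0 <= g (Zs i w) -> f (Zs i w) <= e * g (Zs i w) ->
  ppr_uweight alpha f Zs Ts w i <= e `^ alpha * ppr_uweight alpha g Zs Ts w i.
Proof.
move=> alpha0 e0 f0 g0 fg; rewrite /ppr_uweight mulrCA.
apply: ler_wpM2l; first exact: powR_ge0.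
rewrite -powRM //; apply: ge0_ler_powR; rewrite ?nnegrE ?mulr_ge0 //.
Qed.

Lemma ppr_weight_le (f g : Z -> R) (e : R) w : 0 <= alpha -> 0 < e ->
  (forall z, 0 <= f z) -> (forall z, 0 <= g z) ->
  (forall i, f (Zs i w) <= e * g (Zs i w)) ->
  (forall i, g (Zs i w) <= e * f (Zs i w)) -> forall k,
  ppr_weight alpha f Zs Ts w k
    <= e `^ alpha * e `^ alpha * ppr_weight alpha g Zs Ts w k.
Proof.
move=> alpha0 e0 f0 g0 fg gf; apply: normalized_le.
- exact: powR_gt0.
- exact: ppr_uweight_ge0.
- exact: ppr_uweight_ge0.
- by move=> i; apply: ppr_uweight_le => //; exact: ltW.
- by move=> i; apply: ppr_uweight_le => //; exact: ltW.
Qed.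

(* Pr(((Z_i)_i, K) \in S | (Z_i, T_i)_i); [ppr_prob] is its expectation. *)
Definition ppr_cond_prob (f : Z -> R) (S : set ((nat -> Z) * nat)) (w : Omega)
    : \bar R :=
  (\sum_(k <oo) ((\1_S ((fun i => Zs i w), k) : R)%:E
                 * (ppr_weight alpha f Zs Ts w k)%:E))%E.

Lemma ppr_cond_prob_ge0 f S w : (0 <= ppr_cond_prob f S w)%E.
Proof.
apply: nneseries_ge0 => k _ _.
by rewrite -EFinM lee_fin mulr_ge0 ?ppr_weight_ge0 ?indicE.
Qed.

Lemma ppr_cond_prob_le (f g : Z -> R) (c : R) S w : 0 <= c ->
  (forall k, ppr_weight alpha f Zs Ts w k <= c * ppr_weight alpha g Zs Ts w k) ->
  (ppr_cond_prob f S w <= c%:E * ppr_cond_prob g S w)%E.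
Proof.
move=> c0 fg; rewrite -nneseriesZl => [|k _]; last first.
  by rewrite -EFinM lee_fin mulr_ge0 ?ppr_weight_ge0 ?indicE.
apply: lee_nneseries => [k _ _|k _].
  by rewrite -EFinM lee_fin mulr_ge0 ?ppr_weight_ge0 ?indicE.
by rewrite -!EFinM lee_fin [leRHS]mulrCA ler_wpM2l ?indicE.
Qed.

End ppr_weights.

Section measure_lemmas.
Variables (R : realType) (d : measure_display) (T : measurableType d).
Variable mu : {measure set T -> \bar R}.

Lemma ge0_le_integral_nomeas (g F : T -> \bar R) :
  (forall x, (0 <= g x)%E) -> (forall x, (g x <= F x)%E) ->
  (\int[mu]_x g x <= \int[mu]_x F x)%E.
Proof.
move=> g0 gF; have F0 x : (0 <= F x)%E by apply: le_trans (g0 x) (gF x).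
rewrite !ge0_integralTE //; apply: ereal_sup_le => _ [h hle <-]; exists h => //.
by move=> x; apply: le_trans (hle x) (gF x).
Qed.

(* No measurability is assumed, hence the detour through the simple functions
   below [F1]. *)
Lemma ae_le_integral_scale (F1 F2 : T -> \bar R) (c : R) : 0 < c ->
  (forall w, (0 <= F1 w)%E) -> (forall w, (0 <= F2 w)%E) ->
  {ae mu, forall w, (F1 w <= c%:E * F2 w)%E} ->
  (\int[mu]_w F1 w <= c%:E * \int[mu]_w F2 w)%E.
Proof.
move=> c0 F10 F20 [M [mM M0 sM]].
rewrite (ge0_integralTE mu F10); apply: ge_ereal_sup => _ [h hle <-].
pose G := ~` M; have mG : measurable G by exact: measurableC.
have -> : sintegral mu h = (\int[mu]_w (h w)%:E)%E.
  by rewrite integral_nnsfun // patch_setT.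
pose g w := (h w * \1_G w)%:E.
have mh1G : measurable_fun setT (fun w => h w * \1_G w).
  by apply: measurable_funM; [exact: measurable_funPT|exact: measurable_indic].
have mg : measurable_fun setT g by exact/measurable_EFinP.
rewrite (ae_eq_integral g) //; last first.
- exists M; split => // w /= hw; apply: contrapT => Mw; apply: hw => _.
  by rewrite /g indicE mem_set // mulr1.
- exact/measurable_EFinP.
have h1G0 w : 0 <= h w * \1_G w by rewrite mulr_ge0 ?fun_ge0 ?indicE.
have -> : (\int[mu]_w g w = c%:E * \int[mu]_w (c^-1 * (h w * \1_G w))%:E)%E.
  rewrite -ge0_integralZl_EFin //; last 3 first.
  - by move=> w _; rewrite lee_fin mulr_ge0 // invr_ge0 ltW.
  - by apply/measurable_EFinP; exact: measurable_funM.
  - exact: ltW.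
  by apply: eq_integral => w _; rewrite -EFinM mulrA divff ?mul1r ?gt_eqF.
apply: lee_wpmul2l; first by rewrite lee_fin ltW.
apply: ge0_le_integral_nomeas => w.
  by rewrite lee_fin mulr_ge0 // invr_ge0 ltW.
rewrite indicE; have [Gw|nGw] := boolP (w \in G); last by rewrite !mulr0 F20.
have Fw : (F1 w <= c%:E * F2 w)%E.
  by apply: contrapT => nle; apply: (set_mem Gw); apply: sM.
rewrite mulr1 EFinM (le_trans (lee_wpmul2l _ (le_trans (hle w) Fw))) //.
  by rewrite lee_fin invr_ge0 ltW.
by rewrite muleA -EFinM mulVf ?mul1e ?gt_eqF.
Qed.

Lemma gt0_integral_le0_null (A : set T) (phi : T -> \bar R) : measurable A ->
  measurable_fun A phi -> (forall z, A z -> (0 < phi z)%E) ->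
  (\int[mu]_(z in A) phi z <= 0)%E -> mu A = 0%E.
Proof.
move=> mA mphi phi0 intphi.
have : (\int[mu]_(z in A) `|phi z| = 0)%E.
  rewrite (eq_integral phi) => [|z]; last first.
    by rewrite inE => Az; rewrite gee0_abs // ltW // phi0.
  by apply/eqP; rewrite eq_le intphi integral_ge0 // => z Az; exact/ltW/phi0.
move/(ae_eq_integral_abs mu mA mphi) => [M [mM M0 sM]].
apply: (subset_measure0 mA mM) => // z Az; apply: sM => /= h.
by have := phi0 z Az; rewrite h // ltxx.
Qed.

End measure_lemmas.

Lemma density_le_ae d (Z : measurableType d) (R : realType)
  (Q : {measure set Z -> \bar R}) (f1 f2 : Z -> R) (c : R) : 0 <= c ->
  measurable_fun setT f1 -> measurable_fun setT f2 ->
  (forall z, 0 <= f1 z) -> (forall z, 0 <= f2 z) ->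
  (forall A, measurable A -> (\int[Q]_(z in A) (f2 z)%:E)%E \is a fin_num) ->
  (forall A, measurable A ->
     (\int[Q]_(z in A) (f1 z)%:E <= c%:E * \int[Q]_(z in A) (f2 z)%:E)%E) ->
  {ae Q, forall z, f1 z <= c * f2 z}.
Proof.
move=> c0 mf1 mf2 f10 f20 f2fin f12.
pose A := [set z | c * f2 z < f1 z].
have mcf2 : measurable_fun setT (fun z => c * f2 z) by exact: measurable_funM.
have mA : measurable A.
  have -> : A = ~` (setT `&` [set z | f1 z <= c * f2 z]).
    by rewrite /A setTI; apply/seteqP; split => z /=; rewrite ltNge => /negP.
  by apply/measurableC/measurable_fun_le.
have intcf2 : (\int[Q]_(z in A) (c * f2 z)%:E
                = c%:E * \int[Q]_(z in A) (f2 z)%:E)%E.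
  under eq_integral => z _ do rewrite EFinM.
  apply: ge0_integralZl_EFin => //; first by move=> z _; rewrite lee_fin.
  exact/measurable_EFinP/measurable_funTS.
have int2 : Q.-integrable A (EFin \o (fun z => c * f2 z)).
  apply/integrableP; split; first exact/measurable_EFinP/measurable_funTS.
  under eq_integral => z _ do rewrite /= ger0_norm ?mulr_ge0 //.
  by rewrite intcf2 -(fineK (f2fin A mA)) -EFinM ltry.
have int1 : Q.-integrable A (EFin \o f1).
  apply/integrableP; split; first exact/measurable_EFinP/measurable_funTS.
  under eq_integral => z _ do rewrite /= ger0_norm //.
  by rewrite (le_lt_trans (f12 A mA)) // -(fineK (f2fin A mA)) -EFinM ltry.
exists A; split => //; last by move=> z /= /negP; rewrite -ltNge.
apply: (@gt0_integral_le0_null _ _ _ Q A (fun z => (f1 z)%:E - (c * f2 z)%:E)%E).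
- exact: mA.
- exact/measurable_EFinP/measurable_funTS/measurable_funB.
- by move=> z Az; rewrite sube_gt0 lte_fin.
by rewrite integralB_EFin // intcf2 sube_le0 f12.
Qed.

Lemma ae_along_law dO (Omega : measurableType dO) dZ (Z : measurableType dZ)
  (R : realType) (P : {measure set Omega -> \bar R})
  (Q : {measure set Z -> \bar R}) (Zs : nat -> Omega -> Z) (p : Z -> Prop) :
  (forall i, measurable_fun setT (Zs i)) ->
  (forall i A, measurable A -> P (Zs i @^-1` A) = Q A) ->
  {ae Q, forall z, p z} -> {ae P, forall w, forall i, p (Zs i w)}.
Proof.
move=> Zs_meas Zs_law [M [mM QM sM]]; apply: ae_foralln => i.
exists (Zs i @^-1` M); split.
- by rewrite -[X in measurable X]setTI; exact: Zs_meas.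
- by rewrite Zs_law.
- by move=> w /= npw; exact: sM.
Qed.

Theorem theorem2 (R : realType) (X : Type) (N : X -> X -> Prop)
  (dZ : measure_display) (Z : measurableType dZ)
  (Q : probability Z R) (PZX : X -> probability Z R) (f : X -> Z -> R)
  (N_sym : forall x x', N x x' -> N x' x)
  (PZX_ac : forall x, PZX x `<< Q)
  (f_meas : forall x, measurable_fun setT (f x))
  (f_ge0 : forall x z, 0 <= f x z)
  (f_dens : forall x (A : set Z), measurable A ->
     PZX x A = (\int[Q]_(z in A) (f x z)%:E)%E)
  (eps : R) (PZX_DP : DP N eps 0 measurable (fun x => PZX x))
  (alpha : R) (alpha_gt1 : 1 < alpha)
  (dO : measure_display) (Omega : measurableType dO) (P : probability Omega R)
  (Zs : nat -> Omega -> Z) (Es : nat -> Omega -> R)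
  (Zs_meas : forall i, measurable_fun setT (Zs i))
  (Es_meas : forall j, measurable_fun setT (Es j))
  (Zs_law : forall i (A : set Z), measurable A -> P (Zs i @^-1` A) = Q A)
  (Es_law : forall j (A : set R), measurable A ->
     P (Es j @^-1` A) = exponential_prob 1 A)
  (indep : mutually_independent P
     (fun ij : nat + nat => match ij with
                            | inl i => sigma_of (Zs i)
                            | inr j => sigma_of (Es j) end)) :
  DP N (2 * alpha * eps) 0 seq_nat_measurable
     (fun x => ppr_prob alpha (f x) Zs (arrival Es) P).
Proof.
move=> x x' S Nxx' _; rewrite adde0.
have alpha0 : 0 <= alpha by rewrite ltW // (lt_trans ltr01).
have dens_ae y y' : N y y' -> {ae Q, forall z, f y z <= expR eps * f y' z}.
  move=> Nyy'; apply: density_le_ae; rewrite ?expR_ge0 // => A mA; rewrite -!f_dens //.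
    exact: fin_num_measure.
  by rewrite -[leRHS]adde0 PZX_DP.
have ratio_ae : {ae P, forall w i,
    f x (Zs i w) <= expR eps * f x' (Zs i w) /\
    f x' (Zs i w) <= expR eps * f x (Zs i w)}.
  apply: (@ae_along_law _ _ _ _ _ P Q Zs
    (fun z => f x z <= expR eps * f x' z /\ f x' z <= expR eps * f x z)) => //.
  by apply: filterS2 (dens_ae _ _ Nxx') (dens_ae _ _ (N_sym _ _ Nxx')) => z.
have -> : expR (2 * alpha * eps) = expR eps `^ alpha * expR eps `^ alpha.
  by rewrite -!expRM -expRD; congr expR; ring.
apply: ae_le_integral_scale => [|w|w|].
- by rewrite mulr_gt0 ?powR_gt0 ?expR_gt0.
- exact: ppr_cond_prob_ge0.
- exact: ppr_cond_prob_ge0.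
apply: filterS ratio_ae => w hw; apply: ppr_cond_prob_le.
  by rewrite mulr_ge0 ?powR_ge0.
by apply: ppr_weight_le; rewrite ?expR_gt0 // => i; case: (hw i).
Qed.
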